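(* If $G$ is a triangle-free graph with minimum degree $\delta(G)\ge 3$, then ${\rm gp}_{\rm d}(G)=0$.
   Context: For $S\subseteq V(G)$, two vertices $u,v$ are $S$-positionable if every shortest $u,v$-path $P$ satisfies $V(P)\cap S\subseteq\{u,v\}$. $S$ is a general position set if every two vertices of $S$ are $S$-positionable, and $S$ is a dual general position set if it is a general position set and every two vertices $u,v\in V(G)\setminus S$ are $S$-positionable. ${\rm gp}_{\rm d}(G)$ is the maximum size of a dual general position set of $G$. *)

From mathcomp Require Import all_boot.
From mathcomp Require Import boolp.
Set Implicit Arguments. Unset Strict Implicit. Unset Printing Implicit Defensive.

Definition simple_graph (T : finType) (e : rel T) : Prop :=
  symmetric e /\ irreflexive e.

(* A u,v-walk is encoded by the sequence p of vertices after u: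
   the walk is u :: p, it has length size p and ends at last u p. *)
Definition walk (T : finType) (e : rel T) (u v : T) (p : seq T) : bool :=
  path e u p && (last u p == v).

(* A shortest u,v-path: a u,v-walk with no strictly shorter u,v-walk
   (such a walk is automatically a path, i.e. has no repeated vertices). *)
Definition shortest_path (T : finType) (e : rel T) (u v : T) (p : seq T) : Prop :=
  walk e u v p /\ forall q : seq T, walk e u v q -> size p <= size q.

Definition positionable (T : finType) (e : rel T) (S : {set T}) (u v : T) : Prop :=
  forall p : seq T, shortest_path e u v p ->
    forall x, x \in u :: p -> x \in S -> (x == u) || (x == v).

Definition general_position (T : finType) (e : rel T) (S : {set T}) : Prop :=
  forall u v, u \in S -> v \in S -> u != v -> positionable e S u v.

Definition dual_general_position (T : finType) (e : rel T) (S : {set T}) : Prop :=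
  general_position e S /\
  forall u v, u \notin S -> v \notin S -> u != v -> positionable e S u v.

Definition gpd (T : finType) (e : rel T) : nat :=
  \max_(S : {set T} | `[< dual_general_position e S >]) #|S|.

Definition triangle_free (T : finType) (e : rel T) : Prop :=
  forall x y z, e x y -> e y z -> e x z -> False.

Definition degree (T : finType) (e : rel T) (x : T) : nat := #|[set y | e x y]|.

Definition min_degree_ge (T : finType) (e : rel T) (k : nat) : Prop :=
  forall x : T, k <= degree e x.

From mathcomp Require Import all_boot.
From mathcomp Require Import boolp.

Set Implicit Arguments.
Unset Strict Implicit.
Unset Printing Implicit Defensive.

(* If S contained a vertex x, two of the (at least three) neighbours of x would
   lie on the same side of S.  In a triangle-free graph they are at distance 2,
   so the path through x is a shortest path between them, and its interior
   vertex x lies in S: they are not S-positionable, whichever side they are on. *)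

Lemma shortest_path_common_neighbour (T : finType) (e : rel T) (a x b : T) :
  triangle_free e -> e a x -> e x b -> a != b -> shortest_path e a b [:: x; b].
Proof.
move=> tf eax exb neq_ab; split; first by rewrite /walk /= eax exb eqxx.
case=> [|y [|z q]] //=; rewrite /walk /=; first by rewrite (negbTE neq_ab).
by rewrite andbT => /andP [eay /eqP eyb]; subst y; case: (tf a x b).
Qed.

Lemma common_neighbour_not_positionable (T : finType) (e : rel T)
    (S : {set T}) (a x b : T) :
  simple_graph e -> triangle_free e -> x \in S -> e x a -> e x b -> a != b ->
  ~ positionable e S a b.
Proof.
move=> [sym irr] tf xS exa exb neq_ab pos.
have eax : e a x by rewrite sym.
have x_on_path : x \in [:: a; x; b] by rewrite !inE eqxx orbT.
have [/eqP xa | /eqP xb] :=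
  orP (pos _ (shortest_path_common_neighbour tf eax exb neq_ab) x x_on_path xS).
- by rewrite xa irr in eax.
- by rewrite -xb irr in exb.
Qed.

Lemma card_gt2_same_side (T : finType) (N S : {set T}) :
  2 < #|N| -> exists a b, [/\ a \in N, b \in N, a != b & (a \in S) = (b \in S)].
Proof.
move=> N_gt2.
have [/card_gt1P [a [b [aNS bNS neq_ab]]] | le_NS_1] := ltnP 1 #|N :&: S|.
  move: aNS bNS; rewrite !inE => /andP [aN aS] /andP [bN bS].
  by exists a, b; split; rewrite ?aS ?bS.
have /card_gt1P [a [b [aNS bNS neq_ab]]] : 1 < #|N :\: S|.
  rewrite -(ltn_add2l #|N :&: S|) cardsID.
  by apply: leq_ltn_trans N_gt2; rewrite addn1 ltnS.
move: aNS bNS; rewrite !inE => /andP [/negbTE aS aN] /andP [/negbTE bS bN].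
by exists a, b; split; rewrite ?aS ?bS.
Qed.

Lemma dual_general_position_set0 (T : finType) (e : rel T) (S : {set T}) :
  simple_graph e -> triangle_free e -> min_degree_ge e 3 ->
  dual_general_position e S -> S = set0.
Proof.
move=> simple tf mindeg [gpS gpSc]; apply/setP => x; rewrite inE.
apply/negP => xS.
have [a [b [aN bN neq_ab same_side]]] :=
  card_gt2_same_side S (mindeg x : 2 < #|[set y | e x y]|).
rewrite !inE in aN bN.
apply: (common_neighbour_not_positionable simple tf xS aN bN neq_ab).
have [aS | aS] := boolP (a \in S).
- by apply: gpS; rewrite // -same_side.
- by apply: gpSc; rewrite // -same_side.
Qed.

Theorem mainTheorem9 (T : finType) (e : rel T) :
  simple_graph e -> triangle_free e -> min_degree_ge e 3 ->
  gpd e = 0.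
Proof.
move=> simple tf mindeg; rewrite /gpd big1 // => S /asboolP dgpS.
by rewrite (dual_general_position_set0 simple tf mindeg dgpS) cards0.
Qed.
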